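(* There exist a transient MDP with a sink state and a risk level $\beta>0$ such that $g^\star_\infty(\beta)=-\infty$.
   Context: MDP: states $\bar{\mathcal S}=\{1,\dots,S,S+1\}$, $e:=S+1$ a sink state, $\mathcal S=\{1,\dots,S\}$; finite actions; transitions $p(s,a,s')$, real rewards $r(s,a,s')$; $p(e,a,e)=1$, $r(e,a,e)=0$; initial distribution $\mu$ on $\mathcal S$ with $\mu>0$. Transient: for every stationary deterministic policy $\pi$, $\sum_{t\ge0}\mathbb P^{\pi,s}[\tilde s_t=s']<\infty$ for all $s,s'\in\mathcal S$. $\mathrm{ERM}_\beta[\tilde x]=-\beta^{-1}\log\mathbb E e^{-\beta\tilde x}$. $g_t(\pi,\beta)=\mathrm{ERM}^{\pi,\mu}_\beta[\sum_{k=0}^t r(\tilde s_k,\tilde a_k,\tilde s_{k+1})]$, $g^\star_t(\beta)=\sup_{\pi}g_t(\pi,\beta)$ over history-dependent randomized policies, and $g^\star_\infty(\beta)=\liminf_{t\to\infty}g^\star_t(\beta)$. *)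

From HB Require Import structures.
From mathcomp Require Import all_boot all_order all_algebra.
From mathcomp Require Import all_classical all_reals.
From mathcomp Require Import ereal topology normedtype sequences exp.
Set Implicit Arguments. Unset Strict Implicit. Unset Printing Implicit Defensive.
Import Order.TTheory GRing.Theory Num.Theory.
Local Open Scope ring_scope.

(* States: 'I_nS.+1 = {0,..,nS}; the last one (ord_max) is the sink e = S+1,
   the others are the states 1..S of the paper.  Actions: 'I_nA.+1 (finite,
   nonempty). *)
Definition state (nS : nat) := 'I_nS.+1.
Definition action (nA : nat) := 'I_nA.+1.
Definition sink (nS : nat) : state nS := ord_max.

Section MDP.
Variables (R : realType) (nS nA : nat).
Local Notation St := (state nS).
Local Notation Ac := (action nA).

Definition is_mdp (p r : St -> Ac -> St -> R) (mu : St -> R) : Prop :=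
  [/\ (forall s a s', 0 <= p s a s'),
      (forall s a, \sum_(s' : St) p s a s' = 1),
      (forall a, p (sink nS) a (sink nS) = 1),
      (forall a, r (sink nS) a (sink nS) = 0) &
      [/\ mu (sink nS) = 0,
          (forall s, s != sink nS -> 0 < mu s) &
          \sum_(s : St) mu s = 1]].

(* History-dependent randomized policies: a distribution over actions for
   every history (s_0,a_0,...,s_{k-1},a_{k-1}) and current state s_k. *)
Definition policy := seq (St * Ac) -> St -> Ac -> R.

Definition is_policy (pi : policy) : Prop :=
  (forall h s a, 0 <= pi h s a) /\ (forall h s, \sum_(a : Ac) pi h s a = 1).

Definition det_policy (d : St -> Ac) : policy :=
  fun _ s a => (a == d s)%:R.

(* A trajectory with n transitions: states s_0..s_n, actions a_0..a_{n-1}. *)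
Definition st_cur n (ss : {ffun 'I_n.+1 -> St}) (k : 'I_n) : St :=
  ss (widen_ord (leqnSn n) k).
Definition st_next n (ss : {ffun 'I_n.+1 -> St}) (k : 'I_n) : St :=
  ss (lift ord0 k).
Definition history n (ss : {ffun 'I_n.+1 -> St}) (aa : {ffun 'I_n -> Ac})
    (k : 'I_n) : seq (St * Ac) :=
  map (fun j : 'I_n => (st_cur ss j, aa j)) (seq.filter (fun j : 'I_n => (j < k)%N) (enum 'I_n)).

Definition path_prob (p : St -> Ac -> St -> R) (nu : St -> R) (pi : policy)
    n (ss : {ffun 'I_n.+1 -> St}) (aa : {ffun 'I_n -> Ac}) : R :=
  nu (ss ord0) *
  \prod_(k < n) (pi (history ss aa k) (st_cur ss k) (aa k) *
                 p (st_cur ss k) (aa k) (st_next ss k)).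

Definition expect (p : St -> Ac -> St -> R) (nu : St -> R) (pi : policy) n
    (X : {ffun 'I_n.+1 -> St} -> {ffun 'I_n -> Ac} -> R) : R :=
  \sum_(ss : {ffun 'I_n.+1 -> St}) \sum_(aa : {ffun 'I_n -> Ac})
     path_prob p nu pi ss aa * X ss aa.

Definition dirac_st (s : St) : St -> R := fun s' => (s' == s)%:R.

Definition occ (p : St -> Ac -> St -> R) (pi : policy) (s s' : St) (t : nat) : R :=
  expect p (dirac_st s) pi (n := t) (fun ss _ => ((ss ord_max : St) == s')%:R).

Definition transient (p : St -> Ac -> St -> R) : Prop :=
  forall (d : St -> Ac) (s s' : St), s != sink nS -> s' != sink nS ->
    (\sum_(0 <= t <oo) (occ p (det_policy d) s s' t)%:E < +oo)%E.

Definition ERM_of (beta Eexp : R) : R := - beta^-1 * ln Eexp.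

Definition total_reward (r : St -> Ac -> St -> R) t
    (ss : {ffun 'I_t.+2 -> St}) (aa : {ffun 'I_t.+1 -> Ac}) : R :=
  \sum_(k < t.+1) r (st_cur ss k) (aa k) (st_next ss k).

Definition g_t (p r : St -> Ac -> St -> R) (mu : St -> R) (t : nat)
    (pi : policy) (beta : R) : R :=
  ERM_of beta (expect p mu pi (n := t.+1) (fun ss aa => expR (- beta * total_reward r ss aa))).

Definition g_star_t (p r : St -> Ac -> St -> R) (mu : St -> R) (beta : R)
    (t : nat) : \bar R :=
  ereal_sup [set (g_t p r mu t pi beta)%:E | pi in [set pi | is_policy pi]].

Definition g_star_infty (p r : St -> Ac -> St -> R) (mu : St -> R) (beta : R)
    : \bar R :=
  limn_einf (g_star_t p r mu beta).

End MDP.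

From HB Require Import structures.
From mathcomp Require Import all_boot all_order all_algebra.
From mathcomp Require Import all_classical all_reals.
From mathcomp Require Import ereal topology normedtype sequences exp.
From mathcomp Require Import lra.
Set Implicit Arguments. Unset Strict Implicit. Unset Printing Implicit Defensive.
Import Order.TTheory GRing.Theory Num.Theory.
Local Open Scope ring_scope.

(** Take one transient state [0] that loops on itself with probability
    [e^-1] (otherwise it falls into the sink) and pays reward [-2] per step,
    and a single action, so there is only one policy.  The path that stays in
    [0] for [t+1] steps has probability [e^-(t+1)] but, for [beta = 1], weight
    [exp(2(t+1))] in [E e^(-beta X)]; hence this expectation is at least
    [e^(t+1)] and [g*_t(1) <= -(t+1)], which tends to [-oo].  Transience holds
    because the sink is absorbing, so [P[s_t = 0] = e^-t], which is summable. *)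

Lemma exists_crossing (P : pred nat) i t :
  (i <= t)%N -> P i -> ~~ P t -> exists2 k, (k < t)%N & P k && ~~ P k.+1.
Proof.
elim: t => [|t IHt]; first by rewrite leqn0 => /eqP-> ->.
rewrite leq_eqVlt => /predU1P[-> -> //|lt_it Pi NPt1].
have [Pt|NPt] := boolP (P t); first by exists t => //; rewrite Pt NPt1.
by have [k lt_kt Pk] := IHt lt_it Pi NPt; exists k => //; rewrite ltnW.
Qed.

Lemma limn_einf_eqNy_le (R : realType) (u : (\bar R)^nat) :
  (forall n, (u n <= (- n%:R)%:E)%E) -> limn_einf u = -oo%E.
Proof.
move=> u_le; apply: (cvgNy_limn_einf_sup _).1; apply/cvgeNyPle => A.
near=> n; apply: le_trans (u_le n) _; rewrite lee_fin lerNl.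
by near: n; exact: nbhs_infty_ger.
Unshelve. all: by end_near.
Qed.

Section MDPFacts.
Variables (R : realType) (nS nA : nat).
Local Notation St := (state nS).
Local Notation Ac := (action nA).
Implicit Types (p r : St -> Ac -> St -> R) (mu nu : St -> R) (pi : policy R nS nA).

Lemma mdp_sink_absorbing p r mu a s' :
  is_mdp p r mu -> s' != sink nS -> p (sink nS) a s' = 0.
Proof.
case=> p_ge0 p_sum1 p_sink _ _ ns'.
have := p_sum1 (sink nS) a; rewrite (bigD1 (sink nS)) //= p_sink.
by rewrite -[RHS]addr0 => /addrI /psumr_eq0P; apply.
Qed.

Lemma path_prob_ge0 p nu pi n ss aa :
  (forall s a s', 0 <= p s a s') -> (forall s, 0 <= nu s) -> is_policy pi ->
  0 <= path_prob p nu pi (n := n) ss aa.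
Proof.
move=> p_ge0 nu_ge0 [pi_ge0 _]; rewrite mulr_ge0 // prodr_ge0 // => k _.
exact: mulr_ge0.
Qed.

Lemma path_prob_leave_sink p nu pi n (ss : {ffun 'I_n.+1 -> St}) aa (i : 'I_n.+1) :
  (forall a s', s' != sink nS -> p (sink nS) a s' = 0) ->
  ss i = sink nS -> ss ord_max != sink nS -> path_prob p nu pi ss aa = 0.
Proof.
move=> p_sink ssi ssn; pose P j := ss (inord j) == sink nS.
have [k lt_kn /andP[Pk NPk1]] : exists2 k, (k < n)%N & P k && ~~ P k.+1.
  apply: (@exists_crossing P i); [by rewrite -ltnS | by rewrite /P inord_val ssi |].
  by rewrite /P (_ : inord n = ord_max) //; apply: val_inj; rewrite /= inordK.
have cur : st_cur ss (Ordinal lt_kn) = sink nS.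
  by apply/eqP; move: Pk; rewrite /P; congr (ss _ == _); apply: val_inj;
     rewrite /= inordK // ltnW.
have next : st_next ss (Ordinal lt_kn) != sink nS.
  by move: NPk1; rewrite /P; congr (~~ (ss _ == _)); apply: val_inj;
     rewrite /= inordK.
by rewrite /path_prob (bigD1 (Ordinal lt_kn)) //= cur p_sink // !(mulr0, mul0r).
Qed.

Lemma expect_ge_term p nu pi n X ss aa :
  (forall s a s', 0 <= p s a s') -> (forall s, 0 <= nu s) -> is_policy pi ->
  (forall ss aa, 0 <= X ss aa) ->
  path_prob p nu pi ss aa * X ss aa <= expect p nu pi (n := n) X.
Proof.
move=> p_ge0 nu_ge0 pi_pol X_ge0.
have term_ge0 ss' aa' : 0 <= path_prob p nu pi ss' aa' * X ss' aa'.
  by rewrite mulr_ge0 // path_prob_ge0.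
rewrite /expect (bigD1 ss) //= (bigD1 aa) //= -addrA lerDl.
by rewrite addr_ge0 ?sumr_ge0 // => *; rewrite sumr_ge0.
Qed.

Lemma det_policy_is_policy (d : St -> Ac) : is_policy (det_policy R d).
Proof.
split=> [h s a|h s]; first by rewrite /det_policy ler0n.
by rewrite /det_policy (bigD1 (d s)) //= eqxx big1 ?addr0 // => a /negbTE->.
Qed.

Lemma occ_ge0 p pi s s' t :
  (forall s a s', 0 <= p s a s') -> is_policy pi -> 0 <= occ p pi s s' t.
Proof.
move=> p_ge0 pi_pol; rewrite sumr_ge0 // => ss _; rewrite sumr_ge0 // => aa _.
by rewrite mulr_ge0 // path_prob_ge0 // => x; rewrite /dirac_st ler0n.
Qed.

Lemma transient_of_geometric_occ p q :
  (forall s a s', 0 <= p s a s') -> 0 <= q < 1 ->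
  (forall d s s' t, s != sink nS -> s' != sink nS ->
     occ p (det_policy R d) s s' t <= q ^+ t) ->
  transient p.
Proof.
move=> p_ge0 /andP[q_ge0 q_lt1] occ_le d s s' ns ns'.
apply: (@le_lt_trans _ _ (\sum_(0 <= t <oo) (q ^+ t)%:E)%E).
  apply: lee_nneseries => [t _ _|t _]; rewrite lee_fin ?occ_le //.
  exact/occ_ge0/det_policy_is_policy.
have -> : (\sum_(0 <= t <oo) (q ^+ t)%:E)%E = limn (EFin \o series (geometric 1 q)).
  apply/congr_lim/funext => n /=; rewrite -sumEFin /series /=.
  by apply: eq_bigr => i _; rewrite /geometric /= mul1r.
rewrite EFin_lim ?ltry //; apply: is_cvg_geometric_series.
by rewrite ger0_norm.
Qed.

Lemma ERM_of_le (beta c E : R) :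
  0 < beta -> expR (beta * c) <= E -> ERM_of beta E <= - c.
Proof.
move=> beta_gt0 cE; rewrite /ERM_of mulNr lerN2 ler_pdivlMl //.
rewrite -[X in X <= _]expRK ler_ln ?posrE ?expR_gt0 //.
exact: lt_le_trans (expR_gt0 _) cE.
Qed.

Lemma g_star_t_le p r mu beta t (c : R) :
  (forall pi, is_policy pi -> g_t p r mu t pi beta <= c) ->
  (g_star_t p r mu beta t <= c%:E)%E.
Proof. by move=> g_le; apply: ge_ereal_sup => _ [pi pi_pol <-]; rewrite lee_fin g_le. Qed.

End MDPFacts.

Lemma policy_single_action (R : realType) nS (pi : policy R nS 0) h s a :
  is_policy pi -> pi h s a = 1.
Proof. by case=> _ pi_sum1; rewrite -(pi_sum1 h s) big_ord1 (ord1 a). Qed.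

Section GeometricExample.
Variable R : realType.
Local Notation St := (state 1).
Local Notation Ac := (action 0).

Definition stay : R := expR (-1).

Definition geo_kernel (s : St) (a : Ac) (s' : St) : R :=
  if s == sink 1 then (s' == sink 1)%:R
  else if s' == sink 1 then 1 - stay else stay.

Definition geo_reward (s : St) (a : Ac) (s' : St) : R :=
  if s == sink 1 then 0 else -2.

Definition geo_init (s : St) : R := (s != sink 1)%:R.

Lemma stay_gt0 : 0 < stay. Proof. exact: expR_gt0. Qed.

Lemma stay_lt1 : stay < 1. Proof. by rewrite /stay expR_lt1 ltrN10. Qed.

Lemma nonsink_eq0 (s : St) : s != sink 1 -> s = ord0.
Proof. by case: s => [[|[|]]] //= i _; apply: val_inj. Qed.

Lemma geo_kernel_ge0 s a s' : 0 <= geo_kernel s a s'.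
Proof.
rewrite /geo_kernel; case: ifP => _ //; case: ifP => _.
  by rewrite subr_ge0 ltW // stay_lt1.
exact/ltW/stay_gt0.
Qed.

Lemma geo_is_mdp : is_mdp geo_kernel geo_reward geo_init.
Proof.
split=> [|s a|a|a|]; rewrite ?/geo_kernel ?/geo_reward ?eqxx //.
- exact: geo_kernel_ge0.
- by rewrite big_ord_recr big_ord1 /=; case: ifP; rewrite /= ?add0r // addrC subrK.
split=> [|s ns|]; rewrite /geo_init ?eqxx ?ns //.
by rewrite big_ord_recr big_ord1 /= addr0.
Qed.

Definition stay_path n : {ffun 'I_n -> St} := [ffun => ord0].

Lemma geo_path_prob nu (pi : policy R 1 0) n aa : is_policy pi ->
  path_prob geo_kernel nu pi (stay_path n.+1) aa = nu ord0 * stay ^+ n.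
Proof.
move=> pi_pol; rewrite /path_prob ffunE -[in RHS](card_ord n) -prodr_const.
congr (_ * _); apply: eq_bigr => k _.
by rewrite policy_single_action // /st_cur /st_next !ffunE /geo_kernel mul1r.
Qed.

Lemma geo_occ (d : St -> Ac) s s' t : s != sink 1 -> s' != sink 1 ->
  occ geo_kernel (det_policy R d) s s' t = stay ^+ t.
Proof.
move=> /nonsink_eq0-> /nonsink_eq0->; rewrite /occ /expect.
have pol := det_policy_is_policy R d.
rewrite (bigD1 (stay_path t.+1)) //= [X in _ + X]big1 ?addr0 => [|ss ss_ne].
  under eq_bigr do rewrite geo_path_prob // ffunE /dirac_st eqxx !mul1r mulr1.
  by rewrite sumr_const card_ffun !card_ord exp1n.
apply: big1 => aa _; case: eqP => [ssn|_]; last by rewrite mulr0.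
have /existsP[i /eqP ssi] : [exists i, ss i == sink 1].
  apply: contraNT ss_ne; rewrite negb_exists => /forallP ss0.
  by apply/eqP/ffunP => i; rewrite ffunE; apply/nonsink_eq0/ss0.
rewrite (path_prob_leave_sink _ _ aa _ ssi) ?mul0r ?ssn // => a x nx.
exact: mdp_sink_absorbing geo_is_mdp nx.
Qed.

Lemma geo_transient : transient geo_kernel.
Proof.
apply: (transient_of_geometric_occ (q := stay) geo_kernel_ge0) => [|d s s' t ns ns'].
  by rewrite (ltW stay_gt0) stay_lt1.
by rewrite geo_occ.
Qed.

Lemma geo_expect_ge (pi : policy R 1 0) t : is_policy pi ->
  expR (1 * t.+1%:R) <= expect geo_kernel geo_init pi (n := t.+1)
     (fun ss aa => expR (- 1 * total_reward geo_reward ss aa)).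
Proof.
move=> pi_pol; pose aa0 : {ffun 'I_t.+1 -> Ac} := [ffun => ord0].
apply: le_trans (expect_ge_term (stay_path t.+2) aa0 geo_kernel_ge0 _ _ _) => //.
rewrite geo_path_prob // /geo_init /total_reward /=.
under eq_bigr do rewrite /st_cur ffunE /geo_reward /=.
rewrite sumr_const card_ord /stay [1 * expR _ ^+ _]mul1r -expRM_natl -expRD -[-2 *+ _]mulr_natr.
by rewrite (_ : _ + _ = 1 * t.+1%:R) //; lra.
Qed.

Lemma geo_g_star_infty : g_star_infty geo_kernel geo_reward geo_init 1 = -oo%E.
Proof.
apply: limn_einf_eqNy_le => t; apply: le_trans (g_star_t_le _) _.
  by move=> pi pi_pol; apply: ERM_of_le ltr01 (geo_expect_ge t pi_pol).
by rewrite lee_fin lerN2 ler_nat.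
Qed.

End GeometricExample.

Theorem proposition5 (R : realType) :
  exists (nS nA : nat) (p r : state nS -> action nA -> state nS -> R)
         (mu : state nS -> R) (beta : R),
    [/\ is_mdp p r mu, transient p, 0 < beta &
        g_star_infty p r mu beta = -oo%E].
Proof.
exists 1, 0, (@geo_kernel R), (@geo_reward R), (@geo_init R), 1.
by split; [exact: geo_is_mdp | exact: geo_transient | exact: ltr01 |
           exact: geo_g_star_infty].
Qed.
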